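(* Let $G$ be a finitely generated virtually nilpotent group (i.e. $G$ has a nilpotent normal subgroup of finite index), and let $\Phi$ be a uniformly continuous action of $G$ on a metric space $\Omega$. Let $U,V\subset\Omega$. Assume that there exists an element $g\in G$ such that the homeomorphism $f_g=\Phi(g,\cdot)$ is topologically Anosov with respect to the pair $(U,V)$. Then the action $\Phi$ is topologically Anosov with respect to the pair $(U,V)$.
   Context: Let $(\Omega,\mathrm{dist})$ be a metric space; $B(\delta,x)=\{y:\mathrm{dist}(x,y)<\delta\}$ and $B(\delta,U)=\bigcup_{x\in U}B(\delta,x)$. An action of a group $G$ is a map $\Phi:G\times\Omega\to\Omega$ such that each $f_g=\Phi(g,\cdot)$ is a homeomorphism of $\Omega$, $\Phi(e,x)=x$, and $\Phi(g_1g_2,x)=\Phi(g_1,\Phi(g_2,x))$. For a finitely generated $G$, the action is uniformly continuous if for some finite symmetric generating set $S$ (symmetric: $s\in S\Rightarrow s^{-1}\in S$) all maps $f_s$, $s\in S$, are uniformly continuous. Fix a finite symmetric generating set $S$ of $G$. For $d>0$, a family $\{y_g\}_{g\in G}\subset\Omega$ is a $d$-pseudotrajectory if $\mathrm{dist}(y_{sg},f_s(y_g))<d$ for all $s\in S$, $g\in G$. A uniformly continuous action has the shadowing property on $V\subset\Omega$ if for every $\varepsilon>0$ there is $d>0$ such that for every $d$-pseudotrajectory $\{y_g\}$ with all $y_g\in V$ there is $x_e\in\Omega$ with $\mathrm{dist}(y_g,f_g(x_e))<\varepsilon$ for all $g\in G$ (this property does not depend on the choice of $S$). The action is expansive on $U\subset\Omega$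 if there is $\Delta>0$ such that whenever $x_1,x_2\in U$ satisfy $\Phi(g,x_1),\Phi(g,x_2)\in U$ and $\mathrm{dist}(\Phi(g,x_1),\Phi(g,x_2))<\Delta$ for all $g\in G$, then $x_1=x_2$. The action is topologically Anosov with respect to $(U,V)$ if (TA1) there is $\gamma>0$ with $B(\gamma,V)\subset U$, (TA2) it has the shadowing property on $V$, and (TA3) it is expansive on $U$. A homeomorphism $f$ of $\Omega$ is said to have any of these properties if the $\mathbb Z$-action $(k,x)\mapsto f^k(x)$ (with generating set $\{1,-1\}$) has it. *)

From Stdlib Require Import Reals List ZArith.
Open Scope R_scope.
Set Implicit Arguments.

Record IsGroup (G : Type) (mul : G -> G -> G) (e : G) (inv : G -> G) : Prop := {
  grp_assoc : forall a b c, mul a (mul b c) = mul (mul a b) c;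
  grp_idl : forall a, mul e a = a;
  grp_idr : forall a, mul a e = a;
  grp_invl : forall a, mul (inv a) a = e;
  grp_invr : forall a, mul a (inv a) = e }.

Section GroupNotions.
Variables (G : Type) (mul : G -> G -> G) (e : G) (inv : G -> G).

Inductive gen (A : G -> Prop) : G -> Prop :=
| gen_e : gen A e
| gen_in : forall a, A a -> gen A a
| gen_mul : forall a b, gen A a -> gen A b -> gen A (mul a b)
| gen_inv : forall a, gen A a -> gen A (inv a).

Definition is_subgroup (N : G -> Prop) : Prop :=
  N e /\ (forall a b, N a -> N b -> N (mul a b)) /\ (forall a, N a -> N (inv a)).

Definition is_normal (N : G -> Prop) : Prop :=
  is_subgroup N /\ forall g n, N n -> N (mul (mul g n) (inv g)).

Definition finite_index (N : G -> Prop) : Prop :=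
  exists reps : list G, forall g, exists r n, In r reps /\ N n /\ g = mul r n.

Definition comm (a b : G) : G := mul (mul (inv a) (inv b)) (mul a b).

(* lower central series of the group N: gamma_1 = N, gamma_{i+1} = [N, gamma_i] *)
Fixpoint lcs (N : G -> Prop) (n : nat) : G -> Prop :=
  match n with
  | O => N
  | S m => gen (fun z => exists a b, N a /\ lcs N m b /\ z = comm a b)
  end.

Definition nilpotent_subgroup (N : G -> Prop) : Prop :=
  is_subgroup N /\ exists n, forall z, lcs N n z -> z = e.

Definition virtually_nilpotent : Prop :=
  exists N, is_normal N /\ finite_index N /\ nilpotent_subgroup N.

Definition sym_gen_set (S : list G) : Prop :=
  (forall s, In s S -> In (inv s) S) /\ (forall g, gen (fun s => In s S) g).

Definition finitely_generated : Prop := exists S : list G, forall g, gen (fun s => In s S) g.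

Definition zpow (g : G) (k : Z) : G :=
  match k with
  | Z0 => e
  | Zpos p => Nat.iter (Pos.to_nat p) (mul g) e
  | Zneg p => inv (Nat.iter (Pos.to_nat p) (mul g) e)
  end.
End GroupNotions.

Record IsMetric (X : Type) (dist : X -> X -> R) : Prop := {
  dist_nonneg : forall x y, 0 <= dist x y;
  dist_zero : forall x y, dist x y = 0 <-> x = y;
  dist_sym : forall x y, dist x y = dist y x;
  dist_tri : forall x y z, dist x z <= dist x y + dist y z }.

Section MetricNotions.
Variables (X : Type) (dist : X -> X -> R).

Definition mcontinuous (f : X -> X) : Prop :=
  forall x eps, 0 < eps -> exists delta, 0 < delta /\
    forall y, dist x y < delta -> dist (f x) (f y) < eps.

Definition unif_continuous (f : X -> X) : Prop :=
  forall eps, 0 < eps -> exists delta, 0 < delta /\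
    forall x y, dist x y < delta -> dist (f x) (f y) < eps.

Definition homeomorphism (f : X -> X) : Prop :=
  exists finv : X -> X, (forall x, finv (f x) = x) /\ (forall x, f (finv x) = x) /\
    mcontinuous f /\ mcontinuous finv.

Definition ball_set (delta : R) (U : X -> Prop) : X -> Prop :=
  fun y => exists x, U x /\ dist x y < delta.
End MetricNotions.

Section ActionNotions.
Variables (G : Type) (mul : G -> G -> G) (e : G) (inv : G -> G).
Variables (X : Type) (dist : X -> X -> R).

Definition is_action (Phi : G -> X -> X) : Prop :=
  (forall g, homeomorphism dist (Phi g)) /\ (forall x, Phi e x = x) /\
  (forall g1 g2 x, Phi (mul g1 g2) x = Phi g1 (Phi g2 x)).

Definition unif_continuous_action (Phi : G -> X -> X) : Prop :=
  exists S : list G, sym_gen_set mul e inv S /\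
    forall s, In s S -> unif_continuous dist (Phi s).

Definition pseudotrajectory (Phi : G -> X -> X) (S : list G) (d : R) (y : G -> X) : Prop :=
  forall s g, In s S -> dist (y (mul s g)) (Phi s (y g)) < d.

Definition shadowing_on (Phi : G -> X -> X) (S : list G) (V : X -> Prop) : Prop :=
  forall eps, 0 < eps -> exists d, 0 < d /\
    forall y : G -> X, pseudotrajectory Phi S d y -> (forall g, V (y g)) ->
      exists xe, forall g, dist (y g) (Phi g xe) < eps.

Definition expansive_on (Phi : G -> X -> X) (U : X -> Prop) : Prop :=
  exists Delta, 0 < Delta /\
    forall x1 x2, U x1 -> U x2 ->
      (forall g, U (Phi g x1) /\ U (Phi g x2) /\ dist (Phi g x1) (Phi g x2) < Delta) ->
      x1 = x2.

Definition top_anosov (Phi : G -> X -> X) (S : list G) (U V : X -> Prop) : Prop :=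
  (exists gamma, 0 < gamma /\ forall y, ball_set dist gamma V y -> U y) /\
  shadowing_on Phi S V /\ expansive_on Phi U.
End ActionNotions.

(* A homeomorphism f_g = Phi g is topologically Anosov w.r.t. (U,V) iff the
   Z-action k |-> f_g^k = Phi (g^k) with generating set {1,-1} is. *)
Definition homeo_top_anosov {G X : Type} (mul : G -> G -> G) (e : G) (inv : G -> G)
  (dist : X -> X -> R) (Phi : G -> X -> X) (g : G) (U V : X -> Prop) : Prop :=
  top_anosov Z.add dist (fun k x => Phi (zpow mul e inv g k) x) (1%Z :: (-1)%Z :: nil) U V.

(* The ball condition (TA1) and expansivity (TA3) pass from the cyclic
   subgroup <g> to G directly.  For shadowing (TA2), fix a fine
   G-pseudotrajectory y.  For every h, the family k |-> y(g^k h) is a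
   pseudotrajectory of f_g, hence is shadowed by a point p_h, unique by
   expansivity.  Call a in G "compatible" when Phi a maps shadowing points
   of the orbit through h to shadowing points of the orbit through a h.
   Compatible elements form a subgroup containing g.  Let N be a nilpotent
   normal subgroup of finite index and t = g^m in N (pigeonhole).  If the
   commutator [t,a] is compatible then so is a, because every g^k a is
   (g^r a) g^(mq) c with r < m and c in the subgroup generated by t and
   [t,a]; finitely many elements g^r a suffice, and these move y by a
   controlled amount.  Since iterated commutators [t,[t,...,[t,s]]] vanish
   by nilpotency of N, a descending induction makes every generator, hence
   every element, compatible; then p_e shadows the whole of y. *)

From Pilot Require Import Defs.
From Stdlib Require Import Reals List ZArith Lia Lra Classical ClassicalEpsilon.
Set Implicit Arguments.
Open Scope R_scope.

Section GroupIdentities.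
Variables (G : Type) (mul : G -> G -> G) (e : G) (inv : G -> G).
Hypothesis Hg : IsGroup mul e inv.

Lemma inv_unique x y : mul x y = e -> y = inv x.
Proof.
  intros H. rewrite <- (grp_idl Hg y), <- (grp_invl Hg x), <- (grp_assoc Hg), H, (grp_idr Hg).
  reflexivity.
Qed.

Lemma inv_mul a b : inv (mul a b) = mul (inv b) (inv a).
Proof.
  symmetry; apply inv_unique.
  rewrite <- (grp_assoc Hg), (grp_assoc Hg b), (grp_invr Hg), (grp_idl Hg), (grp_invr Hg).
  reflexivity.
Qed.

Lemma inv_inv a : inv (inv a) = a.
Proof. symmetry; apply inv_unique, (grp_invl Hg). Qed.

Lemma inv_e : inv e = e.
Proof. symmetry; apply inv_unique, (grp_idl Hg). Qed.

Lemma mulKV a b : mul a (mul (inv a) b) = b.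
Proof. rewrite (grp_assoc Hg), (grp_invr Hg), (grp_idl Hg). reflexivity. Qed.

Lemma mulVK a b : mul (inv a) (mul a b) = b.
Proof. rewrite (grp_assoc Hg), (grp_invl Hg), (grp_idl Hg). reflexivity. Qed.

Lemma mul_assoc_r a b c : mul (mul a b) c = mul a (mul b c).
Proof. symmetry; apply (grp_assoc Hg). Qed.
End GroupIdentities.

Ltac group_simpl Hg :=
  repeat progress rewrite ?(mul_assoc_r Hg), ?(inv_mul Hg), ?(inv_inv Hg), ?(inv_e Hg),
    ?(grp_idl Hg), ?(grp_idr Hg), ?(grp_invl Hg), ?(grp_invr Hg), ?(mulKV Hg), ?(mulVK Hg).

Section Powers.
Variables (G : Type) (mul : G -> G -> G) (e : G) (inv : G -> G).
Hypothesis Hg : IsGroup mul e inv.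
Local Notation zp := (zpow mul e inv).

Lemma iter_mul_succ g n : Nat.iter (S n) (mul g) e = mul (Nat.iter n (mul g) e) g.
Proof.
  induction n as [|n IH]; simpl.
  - rewrite (grp_idr Hg), (grp_idl Hg). reflexivity.
  - simpl in IH. rewrite IH, (grp_assoc Hg), IH. reflexivity.
Qed.

Lemma zpow_of_nat g n : zp g (Z.of_nat n) = Nat.iter n (mul g) e.
Proof. destruct n; [reflexivity|]. simpl. rewrite SuccNat2Pos.id_succ. reflexivity. Qed.

Lemma zpow_opp_nat g n : zp g (- Z.of_nat n) = inv (Nat.iter n (mul g) e).
Proof.
  destruct n; simpl; [rewrite (inv_e Hg); reflexivity|].
  rewrite SuccNat2Pos.id_succ. reflexivity.
Qed.

Lemma zpow_succ g k : zp g (k + 1) = mul g (zp g k).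
Proof.
  assert (Hk : exists n, k = Z.of_nat n \/ k = (- Z.of_nat n)%Z) by (exists (Z.abs_nat k); lia).
  destruct Hk as [n [-> | ->]]; destruct n as [|n].
  - simpl. rewrite (grp_idr Hg). reflexivity.
  - replace (Z.of_nat (S n) + 1)%Z with (Z.of_nat (S (S n))) by lia.
    rewrite !zpow_of_nat. reflexivity.
  - simpl. rewrite (grp_idr Hg). reflexivity.
  - replace (- Z.of_nat (S n) + 1)%Z with (- Z.of_nat n)%Z by lia.
    rewrite !zpow_opp_nat, iter_mul_succ. group_simpl Hg. reflexivity.
Qed.

Lemma zpow_pred g k : zp g (k - 1) = mul (inv g) (zp g k).
Proof.
  replace k with (k - 1 + 1)%Z at 2 by lia. rewrite zpow_succ, (mulVK Hg). reflexivity.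
Qed.

Lemma zpow_add g a b : zp g (a + b) = mul (zp g a) (zp g b).
Proof.
  induction a as [|a IH|a IH] using Z.peano_ind.
  - simpl. rewrite (grp_idl Hg). reflexivity.
  - replace (Z.succ a + b)%Z with (a + b + 1)%Z by lia. replace (Z.succ a) with (a + 1)%Z by lia.
    rewrite !zpow_succ, IH, (grp_assoc Hg). reflexivity.
  - replace (Z.pred a + b)%Z with (a + b - 1)%Z by lia. replace (Z.pred a) with (a - 1)%Z by lia.
    rewrite !zpow_pred, IH, (grp_assoc Hg). reflexivity.
Qed.

Lemma zpow_opp g k : zp g (- k) = inv (zp g k).
Proof.
  apply (inv_unique Hg). rewrite <- zpow_add. replace (k + - k)%Z with 0%Z by lia. reflexivity.
Qed.

Lemma zpow_mul g m q : zp g (m * q) = zp (zp g m) q.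
Proof.
  induction q as [|q IH|q IH] using Z.peano_ind.
  - rewrite Z.mul_0_r. reflexivity.
  - replace (m * Z.succ q)%Z with (m + m * q)%Z by lia. replace (Z.succ q) with (q + 1)%Z by lia.
    rewrite zpow_add, zpow_succ, IH. reflexivity.
  - replace (m * Z.pred q)%Z with (- m + m * q)%Z by lia. replace (Z.pred q) with (q - 1)%Z by lia.
    rewrite zpow_add, zpow_pred, zpow_opp, IH. reflexivity.
Qed.
End Powers.

Lemma pigeonhole (A : Type) (f : nat -> A) (reps : list A) :
  (forall i, In (f i) reps) -> exists i j, (i < j)%nat /\ f i = f j.
Proof.
  intros Hin. apply NNPP. intros Hinj.
  assert (ND : NoDup (map f (seq 0 (S (length reps))))).
  { apply (NoDup_nth _ (f 0%nat)). rewrite length_map, length_seq. intros i j Hi Hj E.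
    rewrite !map_nth, !seq_nth in E by auto. simpl in E.
    destruct (Nat.lt_total i j) as [H|[H|H]]; auto; exfalso; apply Hinj; eauto. }
  apply NoDup_incl_length with (l' := reps) in ND.
  - rewrite length_map, length_seq in ND. lia.
  - intros x Hx. apply in_map_iff in Hx. destruct Hx as [i [<- _]]. auto.
Qed.

Section SubgroupFacts.
Variables (G : Type) (mul : G -> G -> G) (e : G) (inv : G -> G).
Hypothesis Hg : IsGroup mul e inv.
Local Notation zp := (zpow mul e inv).

(* Some positive power of any element lies in a subgroup of finite index:
   two of the powers g^0, g^1, ... fall into the same coset. *)
Lemma finite_index_power (N : G -> Prop) g :
  is_subgroup mul e inv N -> finite_index mul N ->
  exists m, (0 < m)%nat /\ N (zp g (Z.of_nat m)).
Proof.
  intros [_ [HNm HNi]] [reps Hr].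
  assert (Hc : forall i : nat, exists r, In r reps /\ exists n, N n /\ zp g (Z.of_nat i) = mul r n).
  { intros i. destruct (Hr (zp g (Z.of_nat i))) as [r [n [H1 [H2 H3]]]]. eauto. }
  set (coset := fun i => proj1_sig (constructive_indefinite_description _ (Hc i))).
  assert (Hcoset : forall i, In (coset i) reps /\
                     exists n, N n /\ zp g (Z.of_nat i) = mul (coset i) n).
  { intros i. unfold coset. destruct (constructive_indefinite_description _ (Hc i)). auto. }
  destruct (pigeonhole coset reps) as [i [j [Hij E]]]; [intros i; apply Hcoset|].
  exists (j - i)%nat. split; [lia|].
  destruct (Hcoset i) as [_ [ni [Hni Ei]]]. destruct (Hcoset j) as [_ [nj [Hnj Ej]]].
  replace (Z.of_nat (j - i)) with (- Z.of_nat i + Z.of_nat j)%Z by lia.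
  rewrite (zpow_add Hg), (zpow_opp Hg), Ei, Ej, E. group_simpl Hg. auto.
Qed.

Definition iter_comm (t s : G) (i : nat) : G := Nat.iter i (comm mul inv t) s.

Lemma iter_comm_lcs (N : G -> Prop) t s :
  is_normal mul e inv N -> N t -> forall i, lcs mul e inv N i (iter_comm t s (S i)).
Proof.
  intros [[_ [HNm HNi]] Hnormal] Ht i. induction i as [|i IH].
  - simpl. unfold comm.
    replace (mul (mul (inv t) (inv s)) (mul t s))
      with (mul (inv t) (mul (mul (inv s) t) (inv (inv s)))) by (group_simpl Hg; reflexivity).
    apply HNm; [apply HNi; auto | apply Hnormal; auto].
  - apply gen_in. exists t, (iter_comm t s (S i)). auto.
Qed.

(* A subgroup containing t and [t,a] contains t^-q a^-1 t^q a for every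
   integer q: this is the "error term" when moving a past powers of t. *)
Lemma commutator_powers_closed (P : G -> Prop) t a :
  (forall x y, P x -> P y -> P (mul x y)) -> (forall x, P x -> P (inv x)) ->
  P t -> P (comm mul inv t a) ->
  forall q, P (mul (inv (zp t q)) (mul (inv a) (mul (zp t q) a))).
Proof.
  intros Pmul Pinv Pt Pc q. induction q as [|q IH|q IH] using Z.peano_ind.
  - replace (mul (inv (zp t 0)) (mul (inv a) (mul (zp t 0) a))) with (mul t (inv t))
      by (simpl; group_simpl Hg; reflexivity).
    auto 6.
  - replace (Z.succ q) with (q + 1)%Z by lia.
    rewrite (zpow_add Hg). change (zp t 1) with (mul t e). rewrite (grp_idr Hg).
    replace (mul (inv (mul (zp t q) t)) (mul (inv a) (mul (mul (zp t q) t) a)))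
      with (mul (mul (inv t) (mul (mul (inv (zp t q)) (mul (inv a) (mul (zp t q) a))) t))
              (comm mul inv t a))
      by (unfold comm; group_simpl Hg; reflexivity).
    auto 6.
  - replace (Z.pred q) with (q + -1)%Z by lia.
    rewrite (zpow_add Hg). change (zp t (-1)) with (inv (mul t e)). rewrite (grp_idr Hg).
    replace (mul (inv (mul (zp t q) (inv t))) (mul (inv a) (mul (mul (zp t q) (inv t)) a)))
      with (mul (mul t (mul (mul (inv (zp t q)) (mul (inv a) (mul (zp t q) a))) (inv t)))
              (inv (mul t (mul (comm mul inv t a) (inv t)))))
      by (unfold comm; group_simpl Hg; reflexivity).
    auto 6.
Qed.
End SubgroupFacts.

Section UniformEstimates.
Variables (G : Type) (mul : G -> G -> G) (e : G) (inv : G -> G).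
Variables (X : Type) (dist : X -> X -> R) (Phi : G -> X -> X).
Hypothesis Hg : IsGroup mul e inv.
Hypothesis Hd : IsMetric dist.
Hypothesis Hact_e : forall x, Phi e x = x.
Hypothesis Hact_mul : forall a b x, Phi (mul a b) x = Phi a (Phi b x).

Lemma unif_continuous_comp f h :
  unif_continuous dist f -> unif_continuous dist h -> unif_continuous dist (fun x => f (h x)).
Proof.
  intros Hf Hh eps Heps. destruct (Hf eps Heps) as [d1 [Hd1 H1]].
  destruct (Hh d1 Hd1) as [d2 [Hd2 H2]]. exists d2. auto.
Qed.

Lemma unif_continuous_ext f h :
  (forall x, f x = h x) -> unif_continuous dist f -> unif_continuous dist h.
Proof.
  intros E Hf eps Heps. destruct (Hf eps Heps) as [d [Hdp H]].
  exists d. split; auto. intros x y Hxy. rewrite <- !E. auto.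
Qed.

Lemma unif_continuous_generated (S : list G) :
  (forall s, In s S -> In (inv s) S) -> (forall s, In s S -> unif_continuous dist (Phi s)) ->
  forall a, gen mul e inv (fun s => In s S) a ->
  unif_continuous dist (Phi a) /\ unif_continuous dist (Phi (inv a)).
Proof.
  intros Hsym Huc a Ga. induction Ga as [| a Ha | a b _ [Ha Ha'] _ [Hb Hb'] | a _ IH].
  - rewrite (inv_e Hg).
    assert (Hid : unif_continuous dist (Phi e)).
    { apply unif_continuous_ext with (fun x => x); auto. intros eps Heps. exists eps. auto. }
    auto.
  - auto.
  - rewrite (inv_mul Hg). split.
    + apply unif_continuous_ext with (fun x => Phi a (Phi b x)); auto using unif_continuous_comp.
    + apply unif_continuous_ext with (fun x => Phi (inv b) (Phi (inv a) x));
        auto using unif_continuous_comp.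
  - rewrite (inv_inv Hg). tauto.
Qed.

Lemma common_modulus (L : list G) :
  (forall a, In a L -> unif_continuous dist (Phi a)) ->
  forall eta, 0 < eta -> exists del, 0 < del /\
    forall b, In b L -> forall x x', dist x x' < del -> dist (Phi b x) (Phi b x') < eta.
Proof.
  intros Huc eta Heta. induction L as [|a L IH].
  - exists 1. split; [lra | intros b []].
  - destruct IH as [d1 [Hd1 H1]]; [intros; apply Huc; simpl; auto|].
    destruct (Huc a (or_introl eq_refl) eta Heta) as [d2 [Hd2 H2]].
    exists (Rmin d1 d2). split; [apply Rmin_pos; auto|].
    intros b [<-|Hb] x x' Hxx'.
    + apply H2. pose proof (Rmin_r d1 d2). lra.
    + apply H1; auto. pose proof (Rmin_l d1 d2). lra.
Qed.

Lemma pseudotrajectory_mono S d d' y :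
  d <= d' -> pseudotrajectory mul dist Phi S d y -> pseudotrajectory mul dist Phi S d' y.
Proof. intros Hdd H s h Hs. specialize (H s h Hs). lra. Qed.

Definition tracked (S : list G) (a : G) : Prop :=
  forall eta, 0 < eta -> exists d, 0 < d /\ forall y, pseudotrajectory mul dist Phi S d y ->
    forall w, dist (y (mul a w)) (Phi a (y w)) < eta.

Lemma tracked_generated (S : list G) :
  (forall a, unif_continuous dist (Phi a)) ->
  forall a, gen mul e inv (fun s => In s S) a -> tracked S a.
Proof.
  intros Huc a Ga. induction Ga as [| a Ha | a b _ IHa _ IHb | a _ IH]; intros eta Heta.
  - exists 1. split; [lra|]. intros y _ w.
    rewrite (grp_idl Hg), Hact_e. rewrite (proj2 (Defs.dist_zero Hd _ _) eq_refl). auto.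
  - exists eta. auto.
  - destruct (Huc a (eta/2)) as [d1 [Hd1 H1]]; [lra|].
    destruct (IHa (eta/2)) as [da [Hda Ta]]; [lra|].
    destruct (IHb d1 Hd1) as [db [Hdb Tb]].
    exists (Rmin da db). split; [apply Rmin_pos; auto|].
    intros y Hy w. rewrite Hact_mul, (mul_assoc_r Hg).
    pose proof (Ta y (pseudotrajectory_mono (Rmin_l da db) Hy) (mul b w)).
    pose proof (H1 _ _ (Tb y (pseudotrajectory_mono (Rmin_r da db) Hy) w)).
    pose proof (Defs.dist_tri Hd (y (mul a (mul b w))) (Phi a (y (mul b w)))
                  (Phi a (Phi b (y w)))).
    lra.
  - destruct (Huc (inv a) eta Heta) as [d1 [Hd1 H1]].
    destruct (IH d1 Hd1) as [da [Hda Ta]]. exists da. split; auto.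
    intros y Hy w. pose proof (H1 _ _ (Ta y Hy (mul (inv a) w))) as H.
    rewrite (mulKV Hg), <- Hact_mul, (grp_invl Hg), Hact_e in H.
    rewrite (Defs.dist_sym Hd). auto.
Qed.

Lemma tracked_list (S : list G) (L : list G) :
  (forall a, In a L -> tracked S a) ->
  forall eta, 0 < eta -> exists d, 0 < d /\ forall y, pseudotrajectory mul dist Phi S d y ->
    forall b, In b L -> forall w, dist (y (mul b w)) (Phi b (y w)) < eta.
Proof.
  intros Htr eta Heta. induction L as [|a L IH].
  - exists 1. split; [lra | intros y _ b []].
  - destruct IH as [d1 [Hd1 H1]]; [intros; apply Htr; simpl; auto|].
    destruct (Htr a (or_introl eq_refl) eta Heta) as [d2 [Hd2 H2]].
    exists (Rmin d1 d2). split; [apply Rmin_pos; auto|].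
    intros y Hy b [<-|Hb] w.
    + apply H2. eapply pseudotrajectory_mono; [apply Rmin_r | exact Hy].
    + apply H1; auto. eapply pseudotrajectory_mono; [apply Rmin_l | exact Hy].
Qed.
End UniformEstimates.

(* Expansivity makes shadowing points unique: two points shadowing the same
   V-valued family within rho stay in U and within 2 rho of each other. *)
Lemma shadowing_point_unique (H X : Type) (dist : X -> X -> R) (Psi : H -> X -> X) (h0 : H)
  (U V : X -> Prop) gam Del rho :
  IsMetric dist -> (forall x, Psi h0 x = x) ->
  (forall y, ball_set dist gam V y -> U y) -> rho <= gam -> 2 * rho <= Del ->
  (forall x1 x2, U x1 -> U x2 ->
     (forall k, U (Psi k x1) /\ U (Psi k x2) /\ dist (Psi k x1) (Psi k x2) < Del) -> x1 = x2) ->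
  forall (z : H -> X) p q, (forall k, V (z k)) ->
    (forall k, dist (z k) (Psi k p) < rho) -> (forall k, dist (z k) (Psi k q) < rho) -> p = q.
Proof.
  intros Hd Hid HU Hrg Hrd HE z p q HV Hp Hq.
  assert (Hnear : forall k x, dist (z k) (Psi k x) < rho -> U (Psi k x)).
  { intros k x Hx. apply HU. exists (z k). split; [auto | lra]. }
  apply HE.
  - rewrite <- (Hid p). exact (Hnear h0 p (Hp h0)).
  - rewrite <- (Hid q). exact (Hnear h0 q (Hq h0)).
  - intros k. repeat split; auto.
    pose proof (Defs.dist_tri Hd (Psi k p) (z k) (Psi k q)).
    rewrite (Defs.dist_sym Hd (Psi k p) (z k)) in *. specialize (Hp k). specialize (Hq k). lra.
Qed.

Section Compatibility.
Variables (G : Type) (mul : G -> G -> G) (e : G) (inv : G -> G).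
Variables (X : Type) (dist : X -> X -> R) (Phi : G -> X -> X).
Hypothesis Hg : IsGroup mul e inv.
Hypothesis Hd : IsMetric dist.
Hypothesis Hact_e : forall x, Phi e x = x.
Hypothesis Hact_mul : forall a b x, Phi (mul a b) x = Phi a (Phi b x).
Variables (g : G) (y : G -> X) (r eta : R).
Hypothesis Hr : r <= 2 * eta.
Local Notation gp := (zpow mul e inv g).

Definition orbit_shadow (rad : R) (h : G) (p : X) : Prop :=
  forall k, dist (y (mul (gp k) h)) (Phi (gp k) p) < rad.

Hypothesis shadow_exists : forall h, exists p, orbit_shadow r h p.
Hypothesis shadow_unique :
  forall h p q, orbit_shadow (2 * eta) h p -> orbit_shadow (2 * eta) h q -> p = q.

Definition compatible (a : G) : Prop :=
  forall h p, orbit_shadow r h p -> orbit_shadow r (mul a h) (Phi a p).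

Lemma orbit_shadow_weaken h p : orbit_shadow r h p -> orbit_shadow (2 * eta) h p.
Proof. intros Hp k. specialize (Hp k). lra. Qed.

Lemma compatible_mul a b : compatible a -> compatible b -> compatible (mul a b).
Proof.
  intros Ca Cb h p Hp. rewrite (mul_assoc_r Hg). intros k. rewrite Hact_mul. apply Ca, Cb, Hp.
Qed.

(* Inverses are compatible by uniqueness of shadowing points. *)
Lemma compatible_inv a : compatible a -> compatible (inv a).
Proof.
  intros Ca h p Hp. destruct (shadow_exists (mul (inv a) h)) as [q Hq].
  pose proof (Ca _ _ Hq) as Haq. rewrite (mulKV Hg) in Haq.
  assert (E : Phi a q = p) by (apply (@shadow_unique h); apply orbit_shadow_weaken; auto).
  rewrite <- E, <- Hact_mul, (grp_invl Hg), Hact_e. exact Hq.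
Qed.

Lemma compatible_power j : compatible (gp j).
Proof.
  intros h p Hp k. rewrite <- Hact_mul, (grp_assoc Hg), <- !(zpow_add Hg). apply Hp.
Qed.

Lemma compatible_generated (A : G -> Prop) :
  (forall a, A a -> compatible a) -> forall a, gen mul e inv A a -> compatible a.
Proof.
  intros HA a Ga. induction Ga; auto using compatible_mul, compatible_inv.
  exact (compatible_power 0).
Qed.

Variable F : list G.
Hypothesis F_modulus :
  forall b, In b F -> forall x x', dist x x' < r -> dist (Phi b x) (Phi b x') < eta.
Hypothesis F_tracked : forall b, In b F -> forall w, dist (y (mul b w)) (Phi b (y w)) < eta.

(* If every g^k a factors as b g^j c with b in F and c compatible, then a is
   compatible: Phi a p shadows the orbit through a h within 2 eta, hence it
   is the shadowing point of that orbit. *)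
Lemma compatible_of_factorization a :
  (forall k, exists b j c, In b F /\ compatible c /\ mul (gp k) a = mul b (mul (gp j) c)) ->
  compatible a.
Proof.
  intros Hfact h p Hp. destruct (shadow_exists (mul a h)) as [q Hq].
  replace (Phi a p) with q; [exact Hq|].
  apply (@shadow_unique (mul a h)); [apply orbit_shadow_weaken; exact Hq|].
  intros k. destruct (Hfact k) as [b [j [c [Hb [Cc Ek]]]]].
  set (w := mul (gp j) (mul c h)).
  assert (Ew : mul (gp k) (mul a h) = mul b w)
    by (unfold w; rewrite (grp_assoc Hg), Ek; group_simpl Hg; reflexivity).
  assert (Epw : Phi (gp k) (Phi a p) = Phi b (Phi (gp j) (Phi c p)))
    by (rewrite <- !Hact_mul, Ek, (mul_assoc_r Hg); reflexivity).
  rewrite Ew, Epw.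
  pose proof (@F_tracked b Hb w) as Htrack.
  pose proof (@F_modulus b Hb _ _ (Cc h p Hp j)) as Hmove.
  pose proof (Defs.dist_tri Hd (y (mul b w)) (Phi b (y w)) (Phi b (Phi (gp j) (Phi c p)))).
  unfold w in *. lra.
Qed.

Variable m : nat.
Hypothesis Hm : (0 < m)%nat.
Local Notation t := (gp (Z.of_nat m)).

Lemma compatible_of_commutator a :
  (forall i, (i < m)%nat -> In (mul (gp (Z.of_nat i)) a) F) ->
  compatible (comm mul inv t a) -> compatible a.
Proof.
  intros HF Cc. apply compatible_of_factorization. intros k.
  assert (Hmz : (0 < Z.of_nat m)%Z) by lia.
  pose proof (Z.mod_pos_bound k (Z.of_nat m) Hmz) as Hmod.
  set (q := (k / Z.of_nat m)%Z).
  exists (mul (gp (k mod Z.of_nat m)) a), (Z.of_nat m * q)%Z,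
    (mul (inv (zpow mul e inv t q)) (mul (inv a) (mul (zpow mul e inv t q) a))).
  split; [|split].
  - replace (k mod Z.of_nat m)%Z with (Z.of_nat (Z.to_nat (k mod Z.of_nat m))) by lia.
    apply HF. lia.
  - apply (commutator_powers_closed Hg);
      auto using compatible_mul, compatible_inv, compatible_power.
  - rewrite (zpow_mul Hg).
    replace k with (k mod Z.of_nat m + Z.of_nat m * q)%Z at 1
      by (unfold q; rewrite Z.add_comm; symmetry; apply Z.div_mod; lia).
    rewrite (zpow_add Hg), (zpow_mul Hg). group_simpl Hg. reflexivity.
Qed.

Lemma compatible_of_nilpotent s n :
  (forall i j, (i <= n)%nat -> (j < m)%nat ->
     In (mul (gp (Z.of_nat j)) (iter_comm mul inv t s i)) F) ->
  iter_comm mul inv t s (S n) = e -> compatible s.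
Proof.
  intros HF Hvanish.
  assert (Hdesc : forall j, (j <= S n)%nat -> compatible (iter_comm mul inv t s (S n - j))).
  { induction j as [|j IH]; intros Hj.
    - rewrite Nat.sub_0_r, Hvanish. exact (compatible_power 0).
    - apply compatible_of_commutator.
      + intros i Hi. apply HF; lia.
      + replace (S n - j)%nat with (S (S n - S j)) in IH by lia. apply IH. lia. }
  specialize (Hdesc (S n) (le_n _)). rewrite Nat.sub_diag in Hdesc. exact Hdesc.
Qed.

Lemma shadow_of_compatible_generators (gens : list G) n :
  (forall a, gen mul e inv (fun s => In s gens) a) ->
  (forall s i j, In s gens -> (i <= n)%nat -> (j < m)%nat ->
     In (mul (gp (Z.of_nat j)) (iter_comm mul inv t s i)) F) ->
  (forall s, In s gens -> iter_comm mul inv t s (S n) = e) ->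
  exists p, forall h, dist (y h) (Phi h p) < r.
Proof.
  intros Hgen HF Hvanish.
  assert (Call : forall a, compatible a).
  { intros a. apply (@compatible_generated (fun s => In s gens)); auto.
    intros s Hs. apply (@compatible_of_nilpotent s n); auto. }
  destruct (shadow_exists e) as [p Hp]. exists p. intros h.
  pose proof (Call h e p Hp 0%Z) as H. simpl in H.
  rewrite (grp_idl Hg), (grp_idr Hg), Hact_e in H. exact H.
Qed.
End Compatibility.

Lemma common_scale eps gam Del :
  0 < eps -> 0 < gam -> 0 < Del ->
  exists eta, 0 < eta /\ eta < eps /\ 4 * eta <= gam /\ 4 * eta <= Del.
Proof.
  intros Heps Hgam HDel. exists (Rmin eps (Rmin gam Del) / 4).
  pose proof (Rmin_l eps (Rmin gam Del)). pose proof (Rmin_r eps (Rmin gam Del)).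
  pose proof (Rmin_l gam Del). pose proof (Rmin_r gam Del).
  assert (0 < Rmin eps (Rmin gam Del)) by (repeat apply Rmin_pos; auto). lra.
Qed.

Lemma shadowing_transfer (G : Type) (mul : G -> G -> G) (e : G) (inv : G -> G)
  (X : Type) (dist : X -> X -> R) (Phi : G -> X -> X) (gens : list G) (g : G)
  (U V : X -> Prop) (N : G -> Prop) (m n : nat) (gam Del : R) :
  IsGroup mul e inv -> IsMetric dist ->
  (forall x, Phi e x = x) -> (forall a b x, Phi (mul a b) x = Phi a (Phi b x)) ->
  (forall a, unif_continuous dist (Phi a)) ->
  (forall a, gen mul e inv (fun s => In s gens) a) ->
  is_normal mul e inv N -> (0 < m)%nat -> N (zpow mul e inv g (Z.of_nat m)) ->
  (forall z, lcs mul e inv N n z -> z = e) ->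
  0 < gam -> (forall x, ball_set dist gam V x -> U x) ->
  0 < Del ->
  (forall x1 x2, U x1 -> U x2 ->
     (forall k, U (Phi (zpow mul e inv g k) x1) /\ U (Phi (zpow mul e inv g k) x2) /\
        dist (Phi (zpow mul e inv g k) x1) (Phi (zpow mul e inv g k) x2) < Del) -> x1 = x2) ->
  shadowing_on Z.add dist (fun k x => Phi (zpow mul e inv g k) x) (1%Z :: (-1)%Z :: nil) V ->
  shadowing_on mul dist Phi gens V.
Proof.
  intros Hg Hd Hact_e Hact_mul Huc Hgen HN Hm HNt Hnil Hgam HU HDel HE HZ eps Heps.
  set (gp := zpow mul e inv g).
  destruct (common_scale Heps Hgam HDel) as (eta & Heta & Heta_eps & Heta_gam & Heta_Del).
  set (t := gp (Z.of_nat m)).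
  (* the elements g^j [t,...,[t,s]] whose moves must be controlled *)
  set (F := flat_map (fun s => flat_map (fun i =>
              map (fun j => mul (gp (Z.of_nat j)) (iter_comm mul inv t s i)) (seq 0 m))
              (seq 0 (S n))) gens).
  destruct (common_modulus Phi F (fun a _ => Huc a) Heta) as [del [Hdel HF]].
  set (r := Rmin eta del).
  assert (Hr : 0 < r) by (apply Rmin_pos; auto).
  assert (Hr_eta : r <= eta) by apply Rmin_l.
  assert (Hr_del : r <= del) by apply Rmin_r.
  destruct (HZ r Hr) as [d1 [Hd1 HZr]].
  destruct (tracked_list (gp 1%Z :: gp (-1)%Z :: F)
              (fun a _ => tracked_generated Phi Hg Hd Hact_e Hact_mul gens Huc (Hgen a))
              (Rmin_pos _ _ Heta Hd1)) as [d [Hd0 Htrack]].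
  exists d. split; [exact Hd0|]. intros y Hy HV.
  assert (Htr : forall b, In b (gp 1%Z :: gp (-1)%Z :: F) -> forall w,
            dist (y (mul b w)) (Phi b (y w)) < eta /\ dist (y (mul b w)) (Phi b (y w)) < d1).
  { intros b Hb w. pose proof (Htrack y Hy b Hb w).
    pose proof (Rmin_l eta d1). pose proof (Rmin_r eta d1). lra. }
  destruct (shadow_of_compatible_generators (g := g) (y := y) (r := r) (eta := eta)
              Hg Hd Hact_e Hact_mul) with (F := F) (m := m) (gens := gens) (n := n) as [p Hp]; auto.
  - lra.
  - (* the g-orbits of y are pseudotrajectories of f_g *)
    intros h. destruct (HZr (fun k => y (mul (gp k) h))) as [p Hp]; [|auto|exists p; exact Hp].
    intros s k Hs. cbv beta. unfold gp.
    rewrite (zpow_add Hg), (mul_assoc_r Hg). fold gp.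
    apply Htr. destruct Hs as [<-|[<-|[]]]; simpl; auto.
  - intros h p q Hp Hq.
    apply (shadowing_point_unique (fun k x => Phi (gp k) x) 0%Z U
             (V := V) (gam := gam) (Del := Del) (rho := 2 * eta) Hd)
      with (z := fun k => y (mul (gp k) h)); auto; lra.
  - intros b Hb x x' Hxx'. apply HF; [exact Hb | lra].
  - intros b Hb w. apply Htr. simpl; auto.
  - intros s i j Hs Hi Hj. apply in_flat_map. exists s. split; [exact Hs|].
    apply in_flat_map. exists i. split; [apply in_seq; lia|].
    apply in_map_iff. exists j. split; [reflexivity | apply in_seq; lia].
  - intros s _. apply Hnil, (iter_comm_lcs Hg); auto.
  - exists p. intros h. specialize (Hp h). lra.
Qed.

Theorem theorem1 (G : Type) (mul : G -> G -> G) (e : G) (inv : G -> G)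
  (X : Type) (dist : X -> X -> R) (Phi : G -> X -> X) (S : list G)
  (U V : X -> Prop) (g : G) :
  IsGroup mul e inv ->
  IsMetric dist ->
  finitely_generated mul e inv ->
  virtually_nilpotent mul e inv ->
  is_action mul e dist Phi ->
  unif_continuous_action mul e inv dist Phi ->
  sym_gen_set mul e inv S ->
  homeo_top_anosov mul e inv dist Phi g U V ->
  top_anosov mul dist Phi S U V.
Proof.
  intros Hg Hd _ [N [HN [HNfin [_ [n Hnil]]]]] [_ [Hact_e Hact_mul]]
    [S' [[Hsym' Hgen'] Huc']] [_ Hgen] [[gam [Hgam HU]] [HZ [Del [HDel HE]]]].
  assert (Huc : forall a, unif_continuous dist (Phi a))
    by (intros a; apply (unif_continuous_generated Phi Hg Hact_e Hact_mul S' Hsym' Huc' (Hgen' a))).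
  destruct (finite_index_power Hg g (proj1 HN) HNfin) as [m [Hm HNt]].
  split; [|split].
  - exists gam. auto.
  - apply (@shadowing_transfer G mul e inv X dist Phi S g U V N m n gam Del); auto.
  -
    exists Del. split; [exact HDel|]. intros x1 x2 H1 H2 Hall. apply HE; auto.
Qed.
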